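(* In the setting of the context, for the iterates of ARDCA started at any $u^0\in\mathbb{D}$, we have $z^k\in\mathbb{D}$, $u^k\in\mathbb{D}$ and $v^k\in\mathbb{D}$ for all $k\ge0$ (for every realization of the random indices).
   Context: Integers $n,t\ge1$, $p,m\ge0$, $\widehat n=n+p+m$, $\mathbb{D}=\{u\in\mathbb{R}^{\widehat n}:u_{n+p+1},\dots,u_{\widehat n}\ge0\}$. Data $A\in\mathbb{R}^{t\times n}$ (columns $A_j$), $B\in\mathbb{R}^{p\times t}$ (rows $B_{j,:}$), $b\in\mathbb{R}^p$, $\mu$-strongly convex $f:\mathbb{R}^t\to\mathbb{R}$, convex $M$-Lipschitz $\phi_i:\mathbb{R}\to\mathbb{R}$ ($i\le n$), convex $g_i:\mathbb{R}^t\to\mathbb{R}$ ($i\le m$) with subgradients bounded in norm by $L_{g_i}$. $L_f(x,u)=f(x)+\langle u_{1:n},A^Tx/n\rangle+\langle u_{n+1:n+p},Bx+b\rangle+\sum_iu_{n+p+i}g_i(x)$, $x^*(u)=\arg\min_xL_f(x,u)$, $d(u)=-L_f(x^*(u),u)$, differentiable on $\mathbb{D}$ with gradient $-[(A^Tx^*(u)/n)^T,(Bx^*(u)+b)^T,g_1(x^*(u)),\dots,g_m(x^*(u))]^T$. $h_i=\frac1n\phi_i^*$ for $i\le n$, $h_i\equiv0$ for $n<i\le n+p$, $h_i(s)=0$ if $s\ge0$ and $+\infty$ else for $i>n+p$. $L_j=\|A_j\|^2/(n^2\mu)$ ($j\le n$), $\|B_{j-n,:}\|^2/\mu$ ($n<j\le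 n+p$), $L_{g_{j-n-p}}^2/\mu$ ($j>n+p$). ARDCA: $\theta_0=1/\widehat n$, $\theta_{k+1}=\frac{\sqrt{\theta_k^4+4\theta_k^2}-\theta_k^2}{2}$; $z^0=u^0$; for $k\ge0$: $v^k=\theta_kz^k+(1-\theta_k)u^k$; $i_k$ uniform on $\{1,\dots,\widehat n\}$; $z^{k+1}_{i_k}=\arg\min_{w\in\mathbb{R}}\widehat n\theta_kL_{i_k}(w-z^k_{i_k})^2+\nabla_{i_k}d(v^k)(w-z^k_{i_k})+h_{i_k}(w)$, $z^{k+1}_j=z^k_j$ ($j\ne i_k$); $u^{k+1}=v^k+\widehat n\theta_k(z^{k+1}-z^k)$. *)

From mathcomp Require Import all_boot all_order all_algebra.
From mathcomp Require Import all_classical all_reals ereal.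
Set Implicit Arguments. Unset Strict Implicit. Unset Printing Implicit Defensive.
Import Order.TTheory GRing.Theory Num.Theory.
Local Open Scope ring_scope.

Section Defs.
Variable R : realType.

Definition dotv (t : nat) (x y : 'I_t -> R) : R := \sum_(i < t) x i * y i.
Definition norm2 (t : nat) (x : 'I_t -> R) : R := Num.sqrt (dotv x x).

Definition strongly_convex (t : nat) (mu : R) (f : ('I_t -> R) -> R) : Prop :=
  forall (x y : 'I_t -> R) (a : R), 0 <= a -> a <= 1 ->
    f (fun i => a * x i + (1 - a) * y i)
      <= a * f x + (1 - a) * f y
         - mu / 2 * a * (1 - a) * (norm2 (fun i => x i - y i)) ^+ 2.

Definition convex_fun (t : nat) (g : ('I_t -> R) -> R) : Prop :=
  forall (x y : 'I_t -> R) (a : R), 0 <= a -> a <= 1 ->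
    g (fun i => a * x i + (1 - a) * y i) <= a * g x + (1 - a) * g y.

Definition convex_fun1 (phi : R -> R) : Prop :=
  forall x y a : R, 0 <= a -> a <= 1 ->
    phi (a * x + (1 - a) * y) <= a * phi x + (1 - a) * phi y.

Definition lipschitz1 (M : R) (phi : R -> R) : Prop :=
  forall x y : R, `|phi x - phi y| <= M * `|x - y|.

Definition is_subgrad (t : nat) (g : ('I_t -> R) -> R) (x s : 'I_t -> R) : Prop :=
  forall y : 'I_t -> R, g x + dotv s (fun i => y i - x i) <= g y.

Definition fconj (phi : R -> R) (s : R) : \bar R :=
  ereal_sup [set (s * x - phi x)%:E | x in [set: R]].

Definition inD (n p m : nat) (u : 'I_(n + p + m) -> R) : Prop :=
  forall k : 'I_m, 0 <= u (rshift (n + p) k).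

Definition hfun (n p m : nat) (phi : 'I_n -> R -> R) (i : 'I_(n + p + m)) (s : R)
  : \bar R :=
  match fintype.split i with
  | inl j => match fintype.split j with
             | inl k => ((n%:R)^-1)%:E * fconj (phi k) s
             | inr _ => 0%E
             end
  | inr _ => if 0 <= s then 0%E else +oo%E
  end.

Definition Lf (t n p m : nat) (A : 'I_t -> 'I_n -> R) (B : 'I_p -> 'I_t -> R)
  (b : 'I_p -> R) (f : ('I_t -> R) -> R) (g : 'I_m -> ('I_t -> R) -> R)
  (x : 'I_t -> R) (u : 'I_(n + p + m) -> R) : R :=
  f x
  + \sum_(k < n) u (lshift m (lshift p k)) * ((\sum_(i < t) A i k * x i) / n%:R)
  + \sum_(k < p) u (lshift m (rshift n k)) * (\sum_(i < t) B k i * x i + b k)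
  + \sum_(k < m) u (rshift (n + p) k) * g k x.

(* gradient of d at u, expressed through x = x^*(u) *)
Definition grad_d (t n p m : nat) (A : 'I_t -> 'I_n -> R) (B : 'I_p -> 'I_t -> R)
  (b : 'I_p -> R) (g : 'I_m -> ('I_t -> R) -> R) (x : 'I_t -> R)
  (i : 'I_(n + p + m)) : R :=
  - match fintype.split i with
    | inl j => match fintype.split j with
               | inl k => (\sum_(l < t) A l k * x l) / n%:R
               | inr k => \sum_(l < t) B k l * x l + b k
               end
    | inr k => g k x
    end.

Definition Lconst (t n p m : nat) (mu : R) (A : 'I_t -> 'I_n -> R)
  (B : 'I_p -> 'I_t -> R) (Lg : 'I_m -> R) (i : 'I_(n + p + m)) : R :=
  match fintype.split i with
  | inl j => match fintype.split j with
             | inl k => (norm2 (fun l => A l k)) ^+ 2 / ((n%:R) ^+ 2 * mu)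
             | inr k => (norm2 (B k)) ^+ 2 / mu
             end
  | inr k => (Lg k) ^+ 2 / mu
  end.

Fixpoint theta (nh : nat) (k : nat) : R :=
  match k with
  | O => (nh%:R)^-1
  | S k' => let th := theta nh k' in
            (Num.sqrt (th ^+ 4 + 4 * th ^+ 2) - th ^+ 2) / 2
  end.

Definition is_argmin (F : R -> \bar R) (w : R) : Prop :=
  forall w' : R, (F w <= F w')%E.

End Defs.

From mathcomp Require Import all_boot all_order all_algebra.
From mathcomp Require Import all_classical all_reals ereal.
From mathcomp Require Import ring lra.
(* Only the last m coordinates are constrained, and there h_i is the indicator
   of [0, +oo), so each proximal step keeps z^k nonnegative there.  For u^k the
   invariant is N theta_k z^k <= u^k (N = n + p + m): it holds at k = 0 because
   N theta_0 = 1, and it propagates because theta is nonincreasing with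
   N theta_k <= 1.  Then v^k, a convex combination of z^k and u^k, is
   nonnegative too.  Only the update rules matter: the data A, B, b, f, g, phi,
   the constants L_j and the gradient never enter the argument. *)

Set Implicit Arguments. Unset Strict Implicit. Unset Printing Implicit Defensive.
Import Order.TTheory GRing.Theory Num.Theory.
Local Open Scope ring_scope.

Definition theta_next (R : rcfType) (th : R) : R :=
  (Num.sqrt (th ^+ 4 + 4 * th ^+ 2) - th ^+ 2) / 2.

Section ThetaNext.
Variables (R : rcfType) (th : R).
Hypothesis th_ge0 : 0 <= th.

Lemma sqrt_theta_next_ge : th ^+ 2 <= Num.sqrt (th ^+ 4 + 4 * th ^+ 2).
Proof.
have th2_ge0 : 0 <= th ^+ 2 by exact: exprn_ge0.
rewrite -[leLHS]ger0_norm // -sqrtr_sqr ler_sqrt; last by rewrite addr_ge0 ?mulr_ge0.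
by rewrite -exprM lerDl mulr_ge0.
Qed.

Lemma sqrt_theta_next_le : Num.sqrt (th ^+ 4 + 4 * th ^+ 2) <= th ^+ 2 + 2 * th.
Proof.
have rhs_ge0 : 0 <= th ^+ 2 + 2 * th by rewrite addr_ge0 ?exprn_ge0 ?mulr_ge0.
rewrite -[leRHS]ger0_norm // -sqrtr_sqr ler_sqrt ?exprn_ge0 //.
have -> : (th ^+ 2 + 2 * th) ^+ 2 = th ^+ 4 + 4 * th ^+ 2 + 4 * th ^+ 3 by ring.
by rewrite lerDl mulr_ge0 ?exprn_ge0.
Qed.

Lemma theta_next_ge0 : 0 <= theta_next th.
Proof. by rewrite divr_ge0 // subr_ge0 sqrt_theta_next_ge. Qed.

Lemma theta_next_le : theta_next th <= th.
Proof. by rewrite ler_pdivrMr // lerBlDl [th * 2]mulrC sqrt_theta_next_le. Qed.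

End ThetaNext.

Section Theta.
Variables (R : realType) (N : nat).

Lemma thetaS k : theta R N k.+1 = theta_next (theta R N k).
Proof. by []. Qed.

Lemma theta_ge0 k : 0 <= theta R N k.
Proof.
elim: k => [|k IH]; first by rewrite /= invr_ge0 ler0n.
by rewrite thetaS theta_next_ge0.
Qed.

Lemma thetaS_le k : theta R N k.+1 <= theta R N k.
Proof. by rewrite thetaS theta_next_le ?theta_ge0. Qed.

Lemma natr_mul_theta_le1 k : (0 < N)%N -> N%:R * theta R N k <= 1.
Proof.
move=> N_gt0; have N0 : N%:R != 0 :> R by rewrite pnatr_eq0 -lt0n.
suff theta_le0 : theta R N k <= theta R N 0.
  by rewrite -[leRHS](divff N0) ler_pM2l ?ltr0n.
by elim: k => [|k IH] //; exact: le_trans (thetaS_le k) IH.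
Qed.

End Theta.

Section MomentumCoordinate.
Variables (R : realDomainType) (N : R) (th z u v : nat -> R).
Hypotheses (N_ge1 : 1 <= N) (th_ge0 : forall k, 0 <= th k)
  (thS_le : forall k, th k.+1 <= th k) (Nth_le1 : forall k, N * th k <= 1)
  (z_ge0 : forall k, 0 <= z k) (u0 : u 0%N = z 0%N)
  (v_def : forall k, v k = th k * z k + (1 - th k) * u k)
  (u_step : forall k, u k.+1 = v k + N * th k * (z k.+1 - z k)).

Lemma momentum_scaled_z_le_u k : N * th k * z k <= u k.
Proof.
elim: k => [|k IH]; first by rewrite u0 ler_piMl.
have N_ge0 : 0 <= N by exact: le_trans N_ge1.
have th_le1 : th k <= 1 := le_trans (ler_peMl (th_ge0 k) N_ge1) (Nth_le1 k).
have th_step : N * th k.+1 * z k.+1 <= N * th k * z k.+1.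
  by rewrite ler_wpM2r // ler_wpM2l.
have u_lower : (1 - th k) * (N * th k * z k) <= (1 - th k) * u k.
  by rewrite ler_wpM2l // subr_ge0.
have slack : 0 <= th k * (1 - N * th k) * z k.
  by rewrite !mulr_ge0 // subr_ge0.
(* u_{k+1} = N th_k z_{k+1} + (1 - th_k) u_k + (1 - N) th_k z_k *)
rewrite u_step v_def; nra.
Qed.

Lemma momentum_ge0 k : 0 <= u k /\ 0 <= v k.
Proof.
have N_ge0 : 0 <= N by exact: le_trans N_ge1.
have u_ge0 k' : 0 <= u k'.
  by apply: le_trans (momentum_scaled_z_le_u k'); rewrite !mulr_ge0.
split=> //; rewrite v_def addr_ge0 ?mulr_ge0 // subr_ge0.
exact: le_trans (ler_peMl (th_ge0 k) N_ge1) (Nth_le1 k).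
Qed.

End MomentumCoordinate.

Section ConstrainedCoordinates.
Variables (R : realType) (n p m : nat) (phi : 'I_n -> R -> R).

Lemma hfun_rshift (j : 'I_m) (s : R) :
  hfun phi (rshift (n + p) j) s = if 0 <= s then 0%E else +oo%E.
Proof. by rewrite /hfun (unsplitK (inr j : 'I_(n + p) + 'I_m)). Qed.

Lemma argmin_hfun_rshift_ge0 (j : 'I_m) (q : R -> R) (w : R) :
  is_argmin (fun s => (q s)%:E + hfun phi (rshift (n + p) j) s)%E w -> 0 <= w.
Proof.
move=> /(_ 0); rewrite !hfun_rshift lexx adde0.
by case: ifPn => // _; rewrite addey // leye_eq.
Qed.

End ConstrainedCoordinates.

Theorem lemma3 (R : realType) (n t p m : nat) (hn : (1 <= n)%N) (ht : (1 <= t)%N)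
  (A : 'I_t -> 'I_n -> R) (B : 'I_p -> 'I_t -> R) (b : 'I_p -> R)
  (mu M : R) (f : ('I_t -> R) -> R) (phi : 'I_n -> R -> R)
  (g : 'I_m -> ('I_t -> R) -> R) (Lg : 'I_m -> R)
  (hmu : 0 < mu) (hf : strongly_convex mu f)
  (hphi : forall i, convex_fun1 (phi i) /\ lipschitz1 M (phi i))
  (hg : forall i, convex_fun (g i))
  (hLg : forall i (x s : 'I_t -> R), is_subgrad (g i) x s -> norm2 s <= Lg i)
  (xstar : ('I_(n + p + m) -> R) -> ('I_t -> R))
  (hxstar : forall u, inD u -> forall x, Lf A B b f g (xstar u) u <= Lf A B b f g x u)
  (u0 : 'I_(n + p + m) -> R) (hu0 : inD u0)
  (idx : nat -> 'I_(n + p + m))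
  (z u v : nat -> 'I_(n + p + m) -> R)
  (hz0 : z 0%N = u0) (hu0' : u 0%N = u0)
  (hv : forall k j, v k j = theta R (n + p + m) k * z k j
                            + (1 - theta R (n + p + m) k) * u k j)
  (hzi : forall k, is_argmin
          (fun w : R =>
             ((((n + p + m)%:R * theta R (n + p + m) k
                * Lconst mu A B Lg (idx k)) * (w - z k (idx k)) ^+ 2
               + grad_d A B b g (xstar (v k)) (idx k) * (w - z k (idx k)))%:E
              + hfun phi (idx k) w)%E)
          (z k.+1 (idx k)))
  (hzj : forall k j, j != idx k -> z k.+1 j = z k j)
  (hu : forall k j, u k.+1 j = v k j
                    + (n + p + m)%:R * theta R (n + p + m) k * (z k.+1 j - z k j)) :
  forall k : nat, inD (z k) /\ inD (u k) /\ inD (v k).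
Proof.
have N_gt0 : (0 < n + p + m)%N by rewrite -addnA (leq_trans hn) ?leq_addr.
have z_ge0 k (j : 'I_m) : 0 <= z k (rshift (n + p) j).
  elim: k => [|k IH]; first by rewrite hz0.
  have [E|/hzj->//] := eqVneq (rshift (n + p) j) (idx k).
  by move: (hzi k); rewrite -E; apply: argmin_hfun_rshift_ge0.
have N_ge1 : 1 <= (n + p + m)%:R :> R by rewrite ler1n.
have u0_z0 j : u 0%N j = z 0%N j by rewrite hz0 hu0'.
have uv_ge0 (k : nat) (j : 'I_m) :=
  momentum_ge0 N_ge1 (@theta_ge0 R _) (@thetaS_le R _)
    (fun k => natr_mul_theta_le1 R k N_gt0) (z_ge0^~ j)
    (u0_z0 _)
    (hv^~ (rshift (n + p) j)) (hu^~ (rshift (n + p) j)) k.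
move=> k; split; first exact: z_ge0.
by split=> j; case: (uv_ge0 k j).
Qed.
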